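(* Let $u\in A^{\mathbb{N}}$ and $x\in\mathbb{P}\mathbb{R}_+^d$. If the worm $W(u)$ has non-empty interior for the topology $\mathcal{T}_x$, then $\pi_x(W(u))$ is bounded.
   Context: $A=\{0,\dots,d\}$, $h(y)=\sum_iy_i$, $P=\{h=0\}\subseteq\mathbb{R}^{d+1}$. $\mathbb{P}\mathbb{R}_+^d$ is the set of positive directions, $v(x)$ the $\ell^1$-normalized representative, $\pi_x(z)=z-h(z)v(x)$. $\mathbb{H}=\{z\in\mathbb{Z}^{d+1}:h(z)\ge0\}$; $\mathcal{T}_x$ is the topology on $\mathbb{H}$ whose open sets are $\pi_x^{-1}(U)\cap\mathbb{H}$ with $U\subseteq P$ open. $W(u)=\{\mathrm{ab}(p):p\text{ finite prefix of }u\}$, $\mathrm{ab}(p)$ counting letters. *)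

From HB Require Import structures.
From mathcomp Require Import all_boot all_order all_algebra.
From mathcomp Require Import reals.
Set Implicit Arguments. Unset Strict Implicit. Unset Printing Implicit Defensive.
Import Order.TTheory GRing.Theory Num.Theory.
Local Open Scope ring_scope.

(* Alphabet A = {0,...,d} is 'I_d.+1; vectors of R^{d+1} are functions 'I_d.+1 -> R,
   vectors of Z^{d+1} are functions 'I_d.+1 -> int. *)

Section Defs.
Variables (R : realType) (d : nat).

Definition hR (y : 'I_d.+1 -> R) : R := \sum_i y i.
Definition hZ (z : 'I_d.+1 -> int) : int := \sum_i z i.

(* v is the l^1-normalized representative of a positive direction x in PR_+^d *)
Definition pos_dir_rep (v : 'I_d.+1 -> R) : Prop :=
  (forall i, 0 < v i) /\ hR v = 1.

Definition projx (v : 'I_d.+1 -> R) (y : 'I_d.+1 -> R) : 'I_d.+1 -> R :=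
  fun i => y i - hR y * v i.

Definition toR (z : 'I_d.+1 -> int) : 'I_d.+1 -> R := fun i => (z i)%:~R.

Definition inP (y : 'I_d.+1 -> R) : Prop := hR y = 0.

(* U is an open subset of P (subspace topology of R^{d+1}, sup-norm balls) *)
Definition openP (U : ('I_d.+1 -> R) -> Prop) : Prop :=
  (forall y, U y -> inP y) /\
  forall y, U y -> exists e : R, 0 < e /\
    forall p, inP p -> (forall i, `|p i - y i| < e) -> U p.

Definition inH (z : 'I_d.+1 -> int) : Prop := 0 <= hZ z.

Definition Tx_open (v : 'I_d.+1 -> R) (O : ('I_d.+1 -> int) -> Prop) : Prop :=
  exists U, openP U /\ forall z, O z <-> (inH z /\ U (projx v (toR z))).

Definition Tx_nonempty_interior (v : 'I_d.+1 -> R) (S : ('I_d.+1 -> int) -> Prop) : Prop :=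
  exists O, Tx_open v O /\ (exists z, O z) /\ (forall z, O z -> S z).

(* ab(p) for the prefix of length n of u *)
Definition ab (u : nat -> 'I_d.+1) (n : nat) : 'I_d.+1 -> int :=
  fun i => (count (fun k => u k == i) (iota 0 n))%:Z.

Definition worm (u : nat -> 'I_d.+1) (z : 'I_d.+1 -> int) : Prop :=
  exists n, z = ab u n.

Definition boundedR (S : ('I_d.+1 -> R) -> Prop) : Prop :=
  exists M : R, forall y, S y -> forall i, `|y i| <= M.

Definition proj_image (v : 'I_d.+1 -> R) (S : ('I_d.+1 -> int) -> Prop)
  (y : 'I_d.+1 -> R) : Prop :=
  exists z, S z /\ y = projx v (toR z).

End Defs.

From mathcomp Require Import all_boot all_order all_algebra.
From mathcomp Require Import reals.
From mathcomp Require Import ring lra zify.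
From Stdlib Require Import Classical.
Set Implicit Arguments. Unset Strict Implicit. Unset Printing Implicit Defensive.
Import Order.TTheory GRing.Theory Num.Theory.
Local Open Scope ring_scope.

(* Let ab u N be an interior point of the worm, with a T_x-neighbourhood of
   radius e.  Simultaneous approximation of the multiples t v, driven by the
   pigeonhole principle on the cells of width 1/K of the fractional parts,
   gives G such that every t is followed back, within G steps, to a time m
   where some integer vector p of height t - m satisfies
   |p - (t - m) v| < 1/K < e.  Then ab u N + p lies in the neighbourhood,
   hence in the worm, hence equals ab u (N + t - m): the projected worm
   returns to the e-ball around its interior point with delays at most G.
   As the projected worm moves by at most 1 per letter, it is bounded. *)

Section Abelianization.
Variables (d : nat) (u : nat -> 'I_d.+1).

Lemma ab_succ n i : ab u n.+1 i = ab u n i + (u n == i)%:R.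
Proof.
rewrite /ab -[n.+1]addn1 iotaD count_cat /= add0n addn0 PoszD.
by case: (u n == i).
Qed.

Lemma hZ_ab n : hZ (ab u n) = n%:Z.
Proof.
elim: n => [|n IH]; first by rewrite /hZ big1.
rewrite /hZ (eq_bigr (fun i => ab u n i + (u n == i)%:R)); last first.
  by move=> i _; rewrite ab_succ.
rewrite big_split /= -/(hZ (ab u n)) IH (bigD1 (u n)) //= eqxx big1 ?addr0.
  by rewrite -PoszD addn1.
by move=> i /negPf; rewrite eq_sym => ->.
Qed.

Lemma ab_addn_bounds n m i : 0 <= ab u (n + m)%N i - ab u n i <= m%:Z.
Proof.
elim: m => [|m IH]; first by rewrite addn0 subrr.
have /andP[IH0 IHm] := IH.
rewrite addnS ab_succ addrAC -(addn1 m) PoszD.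
by apply/andP; split; [apply: addr_ge0 | apply: lerD]; case: (u _ == i).
Qed.

End Abelianization.

Lemma bounded_earlier_value (T : finType) (g : nat -> T) :
  exists G, forall t, exists m, [/\ (m <= G)%N, (m <= t)%N & g m = g t].
Proof.
suff [G HG] : exists G, forall t, g t \in enum T ->
    exists m, [/\ (m <= G)%N, (m <= t)%N & g m = g t].
  by exists G => t; apply: HG; rewrite mem_enum.
elim: (enum T) => [|c s [G IH]]; first by exists 0%N.
have [[t0 gt0] | not_hit] := classic (exists t, g t == c).
  have [m0 /eqP gm0 min_m0] := ex_minnP (ex_intro (fun t => g t == c) t0 gt0).
  exists (maxn G m0) => t; rewrite inE => /orP[/eqP gt | /IH[m [mG mt gm]]].
    by exists m0; rewrite leq_maxr min_m0 ?gt ?gm0 //; apply/eqP.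
  by exists m; rewrite (leq_trans mG (leq_maxl _ _)).
exists G => t; rewrite inE => /orP[/eqP gt | gs]; last exact: IH.
by case: not_hit; exists t; apply/eqP.
Qed.

Section FractionalCells.
Variable R : realType.

Definition frac (x : R) : R := x - (Num.floor x)%:~R.

Lemma frac_itv x : 0 <= frac x < 1.
Proof.
have /andP[lo hi] := floor_itv x.
by rewrite /frac; rewrite intrD in hi; apply/andP; split; lra.
Qed.

(* The j with j/K <= frac x < (j+1)/K; the codomain is 'I_K.+1 rather than
   'I_K only so that it is inhabited when K = 0. *)
Definition frac_cell (K : nat) (x : R) : 'I_K.+1 :=
  inord `|Num.floor (K%:R * frac x)|%N.

Lemma frac_cell_close K x y : (0 < K)%N -> frac_cell K x = frac_cell K y ->
  `|frac x - frac y| < K%:R^-1.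
Proof.
move=> K_gt0 same_cell.
have K_gt0' : 0 < K%:R :> R by rewrite ltr0n.
have cell_range z :
    0 <= Num.floor (K%:R * frac z) /\ Num.floor (K%:R * frac z) < K%:Z.
  have /andP[f0 f1] := frac_itv z.
  rewrite floor_ge0 mulr_ge0 ?ler0n // floor_lt_int.
  by rewrite -[X in _ < X]mulr1 pmulrn ltr_pM2l.
move: same_cell (cell_range x) (cell_range y); rewrite /frac_cell.
set a := Num.floor (K%:R * frac x); set b := Num.floor (K%:R * frac y).
move=> /(congr1 val) /= same [a0 aK] [b0 bK].
have a_eq_b : a = b by move: same; rewrite !inordK; lia.
have := floor_itv (K%:R * frac x); have := floor_itv (K%:R * frac y).
rewrite -/a -/b -a_eq_b intrD => /andP[ly hy] /andP[lx hx].
have : `|K%:R * (frac x - frac y)| < 1.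
  by rewrite mulrBr ltr_norml; apply/andP; split; lra.
by rewrite normrM ger0_norm ?ltW // -ltr_pdivlMl // mulr1.
Qed.

End FractionalCells.

Lemma hR_toR (R : realType) d (z : 'I_d.+1 -> int) : hR (toR R z) = (hZ z)%:~R.
Proof. by rewrite /hR /hZ rmorph_sum. Qed.

Section SimultaneousApproximation.
Variables (R : realType) (d : nat) (v : 'I_d.+1 -> R).
Hypothesis hv1 : hR v = 1.

(* If t v and m v have their fractional parts in the same cells, the
   coordinatewise differences of the floors approximate (t - m) v to 1/K;
   for K > d their sum, an integer within 1 of t - m, equals t - m. *)
Lemma approx_of_same_cells K t m : (d < K)%N -> (m <= t)%N ->
  (forall i, frac_cell K (t%:R * v i) = frac_cell K (m%:R * v i)) ->
  exists p : 'I_d.+1 -> int, hZ p = (t - m)%N /\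
    forall i, `|(p i)%:~R - (t - m)%:R * v i| < K%:R^-1.
Proof.
move=> dK mt same_cells.
have K_gt0 : 0 < K%:R :> R by rewrite ltr0n; apply: leq_ltn_trans dK.
pose err i := frac (t%:R * v i) - frac (m%:R * v i).
have err_small i : `|err i| < K%:R^-1.
  by apply: frac_cell_close; [apply: leq_ltn_trans dK | apply: same_cells].
pose p i := Num.floor (t%:R * v i) - Num.floor (m%:R * v i).
have p_err i : (p i)%:~R = (t - m)%:R * v i - err i :> R.
  by rewrite /err /frac natrB // intrB; ring.
exists p; split; last first.
  by move=> i; rewrite p_err addrAC subrr add0r normrN err_small.
have hZ_p : (hZ p)%:~R = (t - m)%:R - \sum_i err i :> R.
  rewrite -hR_toR /hR (eq_bigr _ (fun i _ => p_err i)) sumrB -mulr_sumr.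
  by rewrite -/(hR v) hv1 mulr1.
have sum_err_small : `|\sum_i err i| < 1.
  apply: le_lt_trans (ler_norm_sum _ _ _) _.
  apply: (@lt_le_trans _ _ (\sum_(i < d.+1) K%:R^-1)).
    by apply: ltr_sum => [|i _]; [apply/hasP; exists ord0 | apply: err_small].
  by rewrite sumr_const card_ord -(mulr_natl K%:R^-1) ler_pdivrMr // mul1r ler_nat.
have : `|(hZ p - (t - m)%N%:Z)%:~R : R| < 1.
  by rewrite intrB hZ_p addrAC subrr add0r normrN.
by rewrite -intr_norm ltrz1; lia.
Qed.

Lemma bounded_delay_approx (e : R) : 0 < e ->
  exists G, forall t, exists m, [/\ (m <= G)%N, (m <= t)%N &
    exists p : 'I_d.+1 -> int, hZ p = (t - m)%N /\
      forall i, `|(p i)%:~R - (t - m)%:R * v i| < e].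
Proof.
move=> e_gt0.
pose K := (Num.bound e^-1 + d).+1.
have dK : (d < K)%N by rewrite ltnS leq_addl.
have Ke : K%:R^-1 < e.
  rewrite -[e]invrK ltf_pV2 ?posrE ?invr_gt0 ?ltr0n //.
  have einv_ge0 : 0 <= e^-1 by rewrite invr_ge0 ltW.
  apply: lt_le_trans (archi_boundP einv_ge0) _.
  by rewrite ler_nat; lia.
have [G HG] := bounded_earlier_value (fun t => [ffun i => frac_cell K (t%:R * v i)]).
exists G => t; have [m [mG mt same]] := HG t.
have same_cells i : frac_cell K (t%:R * v i) = frac_cell K (m%:R * v i).
  by move/(congr1 (fun f : {ffun 'I_d.+1 -> 'I_K.+1} => f i)): same; rewrite !ffunE.
have [p [hp p_close]] := approx_of_same_cells dK mt same_cells.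
by exists m; split=> //; exists p; split=> // i; apply: lt_trans (p_close i) Ke.
Qed.

End SimultaneousApproximation.

Lemma inP_projx (R : realType) d (v y : 'I_d.+1 -> R) :
  hR v = 1 -> inP (projx v y).
Proof.
move=> hv1; rewrite /inP /hR /projx sumrB -mulr_sumr -/(hR v) hv1 mulr1.
by rewrite -/(hR y) subrr.
Qed.

Lemma Tx_open_ball (R : realType) d (v : 'I_d.+1 -> R) O z0 :
  hR v = 1 -> Tx_open v O -> O z0 ->
  exists2 e : R, 0 < e & forall z, inH z ->
    (forall i, `|projx v (toR R z) i - projx v (toR R z0) i| < e) -> O z.
Proof.
move=> hv1 [U [[_ U_open] O_def]] /O_def[_ /U_open[e [e_gt0 ball_U]]].
by exists e => // z Hz close; apply/O_def; split; last exact/ball_U/close/inP_projx.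
Qed.

Lemma bounded_of_recurrent (R : realDomainType) (f : nat -> R) N G (c e : R) :
  (forall n m, `|f (n + m)%N - f n| <= m%:R) ->
  (forall k, (N <= k)%N ->
     exists m, [/\ (m <= G)%N, (m <= k)%N & `|f (k - m)%N - c| < e]) ->
  forall k, `|f k| <= `|f 0%N| + N%:R + G%:R + `|c| + e.
Proof.
move=> lip recur k.
have G_ge0 : 0 <= G%:R :> R := ler0n _ _.
have N_ge0 : 0 <= N%:R :> R := ler0n _ _.
have e_gt0 : 0 < e.
  by have [m [_ _ /(le_lt_trans (normr_ge0 _))]] := recur N (leqnn N).
have c_ge0 := normr_ge0 c; have f0_ge0 := normr_ge0 (f 0%N).
have [kN | Nk] := ltnP k N.
  have := lip 0%N k; rewrite add0n => /(le_trans (lerB_dist _ _)).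
  have : k%:R <= N%:R :> R by rewrite ler_nat ltnW.
  lra.
have [m [mG mk close]] := recur k Nk.
have := lip (k - m)%N m; rewrite subnK // => /(le_trans (lerB_dist _ _)).
have := le_lt_trans (lerB_dist (f (k - m)%N) c) close.
have : m%:R <= G%:R :> R by rewrite ler_nat.
lra.
Qed.

Section ProjectedWorm.
Variables (R : realType) (d : nat) (u : nat -> 'I_d.+1) (v : 'I_d.+1 -> R).
Hypothesis hv : pos_dir_rep v.

Lemma projx_ab k i :
  projx v (toR R (ab u k)) i = (ab u k i)%:~R - k%:R * v i.
Proof. by rewrite /projx hR_toR hZ_ab. Qed.

Lemma projx_ab_lipschitz i n m :
  `|projx v (toR R (ab u (n + m)%N)) i - projx v (toR R (ab u n)) i| <= m%:R.
Proof.
have [v_gt0 hv1] := hv.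
have v_le1 : v i <= 1.
  rewrite -hv1 /hR (bigD1 i) //= lerDl.
  by apply: sumr_ge0 => j _; apply: ltW.
have /andP[] := ab_addn_bounds u n m i.
rewrite -(ler0z R) -(ler_int R) intrB !projx_ab natrD => a_ge0 a_le.
have mv_ge0 : 0 <= m%:R * v i by rewrite mulr_ge0 // ltW.
have mv_le : m%:R * v i <= m%:R by rewrite ler_piMr.
by rewrite ler_norml; apply/andP; split; lra.
Qed.

Lemma projx_worm_recurrent O N : Tx_open v O -> O (ab u N) ->
  (forall z, O z -> worm u z) ->
  exists G e, forall k, (N <= k)%N -> exists m, [/\ (m <= G)%N, (m <= k)%N &
    forall i, `|projx v (toR R (ab u (k - m)%N)) i - projx v (toR R (ab u N)) i| < e].
Proof.
move=> O_open O_N O_worm; have [_ hv1] := hv.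
have [e e_gt0 ball_O] := Tx_open_ball hv1 O_open O_N.
have [G HG] := bounded_delay_approx hv1 e_gt0.
exists G, e => k Nk; have [m [mG mt [p [hZ_p p_close]]]] := HG (k - N)%N.
pose z i := ab u N i + p i.
have hZ_z : hZ z = (k - m)%N.
  rewrite /hZ big_split /= -/(hZ (ab u N)) -/(hZ p) hZ_ab hZ_p -PoszD; congr Posz.
  by lia.
have z_close i : `|projx v (toR R z) i - projx v (toR R (ab u N)) i| < e.
  have k_m : ((k - m)%N%:Z)%:~R = N%:R + (k - N - m)%:R :> R.
    by rewrite -pmulrn -natrD; congr _%:R; lia.
  rewrite projx_ab /projx hR_toR hZ_z k_m /toR /z intrD.
  by move: (p_close i); congr (`|_| < _); ring.
have z_H : inH z by rewrite /inH hZ_z.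
have [n z_ab] := O_worm z (ball_O z z_H z_close).
exists m; split=> //; first by lia.
have : hZ z = hZ (ab u n) by rewrite z_ab.
by rewrite hZ_z hZ_ab => -[->]; rewrite -z_ab.
Qed.

End ProjectedWorm.

Theorem lemma3p15 (R : realType) (d : nat) (u : nat -> 'I_d.+1)
  (v : 'I_d.+1 -> R) :
  pos_dir_rep v ->
  Tx_nonempty_interior v (worm u) ->
  boundedR (proj_image v (worm u)).
Proof.
move=> hv [O [O_open [[z0 O_z0] O_worm]]].
have [N z0_ab] := O_worm z0 O_z0; rewrite z0_ab in O_z0.
have [G [e recur]] := projx_worm_recurrent hv O_open O_z0 O_worm.
pose c i := projx v (toR R (ab u N)) i.
exists (N%:R + G%:R + \sum_j `|c j| + e) => _ [_ [[k ->] ->]] i.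
have recur_i k' : (N <= k')%N -> exists m,
    [/\ (m <= G)%N, (m <= k')%N & `|projx v (toR R (ab u (k' - m))) i - c i| < e].
  by move=> /recur[m [mG mk close]]; exists m.
have := bounded_of_recurrent (projx_ab_lipschitz u hv i) recur_i k.
have c_le_sum : `|c i| <= \sum_j `|c j|.
  by rewrite (bigD1 i) //= lerDl sumr_ge0.
have start0 : projx v (toR R (ab u 0)) i = 0 by rewrite projx_ab mul0r subr0.
rewrite start0 normr0 add0r; lra.
Qed.
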